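(* Assume that the basis of canonical cycles $(b_1,b_2,a_1,a_2)$ satisfying $a_1^{\mu}=a_2$, $b_1^{\mu}=b_2$ is transformed by a matrix $T\in \mathrm{Sp}(4,\mathbb{Z})$ to another basis $(b'_1,b'_2,a'_1,a'_2)$ satisfying the same relation: $a_1'^{\mu}=a_2'$, $b_1'^{\mu}=b_2'$. Then the action of the matrix $T$ on the matrix of $b$-periods $\mathbf{B}=\frac{1}{2}\begin{pmatrix}\mathbf{x}+\mathbf{y} & \mathbf{x}-\mathbf{y}\\ \mathbf{x}-\mathbf{y} & \mathbf{x}+\mathbf{y}\end{pmatrix}$ gives rise to an action of two elements $\gamma_1,\gamma_2\in\Gamma$, such that $\gamma_1\gamma_2^{-1}\in\Gamma(2)$, on $\mathbf{x}$ and $\mathbf{y}$, respectively. The matrix $T$ is expressed in terms of $\gamma_{1,2}$ as follows: if $\gamma_i=\begin{pmatrix} k_i & l_i\\ m_i & n_i\end{pmatrix}$, $i=1,2$, then $$T=\frac{1}{2}\begin{pmatrix} k_1+k_2 & k_1-k_2 & l_1+l_2 & l_1-l_2\\ k_1-k_2 & k_1+k_2 & l_1-l_2 & l_1+l_2\\ m_1+m_2 & m_1-m_2 & n_1+n_2 & n_1-n_2\\ m_1-m_2 & m_1+m_2 & n_1-n_2 & n_1+n_2\end{pmatrix}.$$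
   Context: Consider a genus two curve $y^2=(z^2-1)(z^2-r_1^2)(z^2-r_2^2)$, $r_1,r_2\in\mathbb{C}$, which besides the hyperelliptic involution admits the involution $\mu: z\mapsto -z$. A canonical basis of cycles $(b_1,b_2,a_1,a_2)$ is chosen so that $a_1^{\mu}=a_2$, $b_1^{\mu}=b_2$ (superscript $\mu$ denotes the image of a cycle under $\mu$); in such a basis the matrix of $b$-periods has the form $\mathbf{B}=\frac{1}{2}\begin{pmatrix}\mathbf{x}+\mathbf{y} & \mathbf{x}-\mathbf{y}\\ \mathbf{x}-\mathbf{y} & \mathbf{x}+\mathbf{y}\end{pmatrix}$ with $\mathbf{x},\mathbf{y}$ in the upper half-plane. A matrix $T=\begin{pmatrix}A&B\\C&D\end{pmatrix}\in\mathrm{Sp}(4,\mathbb{Z})$ acting on the vector $(b_1,b_2,a_1,a_2)^t$ acts on the matrix of $b$-periods by $\mathbf{B}\mapsto (A\mathbf{B}+B)(C\mathbf{B}+D)^{-1}$; elements of $\Gamma$ act on the upper half-plane by Möbius transformations. Here $\Gamma=SL(2,\mathbb{Z})$ and $\Gamma(2)$ is the principal congruence subgroup of $\Gamma$ consisting of matrices $\gamma\equiv I \pmod 2$. *)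

From mathcomp Require Import all_boot all_algebra.
From mathcomp Require Import reals.
From mathcomp Require Export complex.
Set Implicit Arguments. Unset Strict Implicit. Unset Printing Implicit Defensive.
Import GRing.Theory Num.Theory.
Local Open Scope ring_scope.

(* Homology H_1 of the genus-2 curve with integer coefficients, written in
   coordinates w.r.t. the canonical basis (b1,b2,a1,a2): index 0 = b1,
   1 = b2, 2 = a1, 3 = a2. *)
Definition cycle := 'rV[int]_(2 + 2).

(* Matrix of the action of the involution mu on H_1 in the basis
   (b1,b2,a1,a2): since a1^mu = a2, a2^mu = a1, b1^mu = b2, b2^mu = b1,
   mu swaps coordinates 0<->1 and 2<->3. *)
Definition mu_mx : 'M[int]_(2 + 2) :=
  \matrix_(i, j) (if (j : nat) == (if (i : nat) == 0%N then 1%N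
                                   else if (i : nat) == 1%N then 0%N
                                   else if (i : nat) == 2%N then 3%N
                                   else 2%N) then 1 else 0).

Definition mu_cyc (c : cycle) : cycle := c *m mu_mx.

Definition ent (T : 'M[int]_(2 + 2)) (i j : nat) : int := T (inord i) (inord j).

(* the k-th new cycle (b'_1,b'_2,a'_1,a'_2) when the column vector
   (b1,b2,a1,a2)^t is transformed by T: it is the k-th row of T *)
Definition new_cycle (T : 'M[int]_(2 + 2)) (k : nat) : cycle := row (inord k) T.

Definition Jmx : 'M[int]_(2 + 2) := block_mx 0 1%:M (- 1%:M) 0.
Definition symplectic (T : 'M[int]_(2 + 2)) : Prop := T *m Jmx *m T^T = Jmx.

Definition SL2Z (g : 'M[int]_2) : Prop := \det g = 1.
Definition Gamma2 (g : 'M[int]_2) : Prop :=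
  SL2Z g /\ forall i j : 'I_2, (2 %| g i j - (i == j)%:R)%Z.

Definition upper_half (R : realType) (z : R[i]) : Prop := 0 < complex.Im z.

Definition mobius (R : realType) (g : 'M[int]_2) (z : R[i]) : R[i] :=
  ((g 0 0)%:~R * z + (g 0 1)%:~R) / ((g 1 0)%:~R * z + (g 1 1)%:~R).

Definition per_mx (R : realType) (x y : R[i]) : 'M[R[i]]_2 :=
  \matrix_(i, j) (if i == j then (x + y) / 2 else (x - y) / 2).

Definition sp_act (R : realType) (T : 'M[int]_(2 + 2)) (Bm : 'M[R[i]]_2)
  : 'M[R[i]]_2 :=
  let T' := map_mx (fun z : int => z%:~R : R[i]) T in
  (ulsubmx T' *m Bm + ursubmx T') *m invmx (dlsubmx T' *m Bm + drsubmx T').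

(* T commutes with mu, so each 2x2 block of T is a circulant [[p, q], [q, p]].
   Circulants form a commutative algebra, diagonalised by the eigenvectors
   (1, 1) and (1, -1) of mu with eigenvalues p + q and p - q, and the period
   matrix B is the circulant with eigenvalues x and y. The action of T on B
   therefore splits into two Moebius actions, by the matrices g1 and g2
   collecting the eigenvalues p + q, resp. p - q, of the four blocks. The
   symplectic relation A D^T - B C^T = 1 between the blocks becomes
   det g1 = det g2 = 1, and g1 - g2 = 2 [[q_A, q_B], [q_C, q_D]] puts
   g1 g2^-1 in Gamma(2). *)

From mathcomp Require Import all_boot all_algebra.
From mathcomp Require Import reals complex.
From mathcomp Require Import ring.
Import GRing.Theory Num.Theory.
Set Implicit Arguments. Unset Strict Implicit. Unset Printing Implicit Defensive.
Local Open Scope ring_scope.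

Definition circ (T : Type) (p q : T) : 'M[T]_2 :=
  \matrix_(i, j) if i == j then p else q.

Section Circulant.
Variable R : pzRingType.

Lemma circ_mul (p q r s : R) :
  circ p q *m circ r s = circ (p * r + q * s) (p * s + q * r).
Proof.
apply/matrixP => i j; rewrite !mxE !big_ord_recl big_ord0 !mxE.
by case: i j => [[|[|?]] ?] [[|[|?]] ?] //=; rewrite addr0 // addrC.
Qed.

Lemma circ_add (p q r s : R) : circ p q + circ r s = circ (p + r) (q + s).
Proof. by apply/matrixP => i j; rewrite !mxE; case: eqP. Qed.

Lemma circ_sub (p q r s : R) : circ p q - circ r s = circ (p - r) (q - s).
Proof. by apply/matrixP => i j; rewrite !mxE; case: eqP. Qed.

Lemma circ1 : circ 1 0 = 1%:M :> 'M[R]_2.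
Proof. by apply/matrixP => i j; rewrite !mxE; case: eqP. Qed.

Lemma tr_circ (p q : R) : (circ p q)^T = circ p q.
Proof. by apply/matrixP => i j; rewrite !mxE eq_sym. Qed.

Lemma circ_inj (p q r s : R) : circ p q = circ r s -> p = r /\ q = s.
Proof. by move/matrixP=> E; have := E 0 0; have := E 0 1; rewrite !mxE. Qed.

End Circulant.

Lemma map_circ (T U : Type) (f : T -> U) (p q : T) :
  map_mx f (circ p q) = circ (f p) (f q).
Proof. by apply/matrixP => i j; rewrite !mxE; case: eqP. Qed.

Lemma circ_symplectic_det (R : comPzRingType) (a b c d e f g h : R) :
  circ a b *m circ g h - circ c d *m circ e f = 1%:M ->
  (a + b) * (g + h) - (c + d) * (e + f) = 1 /\ (a - b) * (g - h) - (c - d) * (e - f) = 1.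
Proof.
rewrite !circ_mul circ_sub -circ1 => /circ_inj[sympl_diag sympl_offdiag].
split; [rewrite -[1]addr0 | rewrite -[1]subr0]; rewrite -{1}sympl_diag -sympl_offdiag; ring.
Qed.

Section PeriodMatrix.
Variable R : realType.
Implicit Types u v x y p q : R[i].

Lemma two_neq0 : (2 : R[i]) != 0.
Proof. by rewrite pnatr_eq0. Qed.

Lemma per_mxE x y : per_mx x y = circ ((x + y) / 2) ((x - y) / 2).
Proof. by []. Qed.

Lemma circ_per_mx p q : circ p q = per_mx (p + q) (p - q).
Proof.
have h2 := two_neq0.
by rewrite per_mxE; congr circ; field.
Qed.

Lemma per_mx_mul u v x y : per_mx u v *m per_mx x y = per_mx (u * x) (v * y).
Proof.
have h2 := two_neq0.
by rewrite !per_mxE circ_mul; congr circ; field.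
Qed.

Lemma per_mx_add u v x y : per_mx u v + per_mx x y = per_mx (u + x) (v + y).
Proof. by rewrite !per_mxE circ_add; congr circ; ring. Qed.

Lemma per_mx1 : per_mx 1 1 = 1%:M :> 'M[R[i]]_2.
Proof. by rewrite -circ1 circ_per_mx addr0 subr0. Qed.

Lemma invmx_per_mx u v : u != 0 -> v != 0 -> invmx (per_mx u v) = per_mx u^-1 v^-1.
Proof.
move=> u0 v0; have /mulmx1_unit[unit_uv _]: per_mx u v *m per_mx u^-1 v^-1 = 1%:M.
  by rewrite per_mx_mul !divff // per_mx1.
by rewrite -[RHS]mul1mx -(mulVmx unit_uv) -mulmxA per_mx_mul !divff // per_mx1 mulmx1.
Qed.

End PeriodMatrix.

Lemma entE (T : 'M[int]_(2 + 2)) (i j : 'I_(2 + 2)) : T i j = ent T i j.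
Proof. by rewrite /ent !inord_val. Qed.

Lemma mu_cyc_new_cycle (T : 'M[int]_(2 + 2)) (p q : nat) :
  mu_cyc (new_cycle T p) = new_cycle T q -> (p < 4)%N ->
  [/\ ent T q 0 = ent T p 1, ent T q 1 = ent T p 0,
      ent T q 2 = ent T p 3 & ent T q 3 = ent T p 2].
Proof.
move=> /matrixP mu_pq lt_p4.
have entq j : ent T q j = mu_cyc (new_cycle T p) 0 (inord j) by rewrite mu_pq mxE.
rewrite !entq /mu_cyc /new_cycle !mxE !big_ord_recl !big_ord0 !mxE /= !inordK //=.
by rewrite !entE !inordK // !mulr0 !mulr1 !add0r !addr0.
Qed.

Lemma mu_invariant_blocks (T : 'M[int]_(2 + 2)) :
  mu_cyc (new_cycle T 0) = new_cycle T 1 -> mu_cyc (new_cycle T 2) = new_cycle T 3 ->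
  T = block_mx (circ (ent T 0 0) (ent T 0 1)) (circ (ent T 0 2) (ent T 0 3))
               (circ (ent T 2 0) (ent T 2 1)) (circ (ent T 2 2) (ent T 2 3)).
Proof.
move=> /mu_cyc_new_cycle/(_ isT)[r10 r11 r12 r13] /mu_cyc_new_cycle/(_ isT)[r30 r31 r32 r33].
apply/matrixP => i j; rewrite entE.
case: (split_ordP i) => i' ->; case: (split_ordP j) => j' ->;
  rewrite ?block_mxEul ?block_mxEur ?block_mxEdl ?block_mxEdr mxE;
  by case: i' j' => [[|[|?]] ?] [[|[|?]] ?].
Qed.

Lemma symplectic_ur (R : pzRingType) (n : nat) (T : 'M[R]_(n + n)) :
  T *m block_mx 0 1%:M (- 1%:M) 0 *m T^T = block_mx 0 1%:M (- 1%:M) 0 ->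
  ulsubmx T *m (drsubmx T)^T - ursubmx T *m (dlsubmx T)^T = 1%:M.
Proof.
rewrite -[T in LHS]submxK mulmx_block tr_block_mx mulmx_block => /eq_block_mx[_ <- _ _].
by rewrite !mulmx0 !mulmxN !mulmx1 !addr0 !add0r mulNmx addrC.
Qed.

Lemma det_mx22 (R : comPzRingType) (A : 'M[R]_2) :
  \det A = A 0 0 * A 1 1 - A 0 1 * A 1 0.
Proof.
rewrite (expand_det_row _ 0) !big_ord_recl big_ord0 /cofactor !det_mx11 !mxE /=.
have -> : lift (0 : 'I_2) (0 : 'I_1) = 1 by apply/val_inj.
have -> : lift (1 : 'I_2) (0 : 'I_1) = 0 by apply/val_inj.
by rewrite expr0 expr1 mul1r addr0 mulN1r mulrN.
Qed.

Definition mx2 (T : Type) (p q r s : T) : 'M[T]_2 :=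
  \matrix_(i, j) if i == 0 then (if j == 0 then p else q) else (if j == 0 then r else s).

Lemma det_mx2 (R : comPzRingType) (p q r s : R) : \det (mx2 p q r s) = p * s - q * r.
Proof. by rewrite det_mx22 !mxE. Qed.

Lemma Gamma2_mul_invmx (g1 g2 : 'M[int]_2) :
  SL2Z g1 -> SL2Z g2 -> (forall i j, (2 %| g1 i j - g2 i j)%Z) ->
  Gamma2 (g1 *m invmx g2).
Proof.
move=> det_g1 det_g2 g1_congr_g2; split.
  by rewrite /SL2Z det_mulmx det_inv det_g1 det_g2 invr1 mulr1.
have unit_g2 : g2 \in unitmx by rewrite unitmxE det_g2 unitr1.
have -> : g1 = g2 + 2 *: \matrix_(i, j) ((g1 i j - g2 i j) %/ 2)%Z.
  by apply/matrixP => i j; rewrite !mxE mulrC divzK // addrC subrK.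
rewrite mulmxDl mulmxV // -scalemxAl => i j.
by rewrite !mxE addrAC subrr add0r dvdz_mulr.
Qed.

Section Mobius.
Variable R : realType.

Lemma mobius_den_neq0 (g : 'M[int]_2) (x : R[i]) :
  \det g != 0 -> upper_half x -> (g 1 0)%:~R * x + (g 1 1)%:~R != 0.
Proof.
rewrite det_mx22 => det_g Im_x; apply: contraNneq det_g => den0.
have g10 : g 1 0 = 0.
  apply/eqP; move: (congr1 (@complex.Im R) den0).
  rewrite raddfD /= mulrzl !raddfMz /= mul0rz addr0 => /eqP.
  by rewrite mulrz_eq0 (negbTE (lt0r_neq0 Im_x)) orbF.
move: den0; rewrite g10 mul0r add0r => /eqP; rewrite intr_eq0 => /eqP ->.
by rewrite !mulr0 subr0.
Qed.

(* The paper's formula for T in terms of gamma_1 = g1 and gamma_2 = g2, since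
   per_mx u v = 1/2 [[u + v, u - v], [u - v, u + v]]. *)
Definition mu_split (g1 g2 : 'M[int]_2) : 'M[R[i]]_(2 + 2) :=
  let pm i j := per_mx (g1 i j)%:~R (g2 i j)%:~R in
  block_mx (pm 0 0) (pm 0 1) (pm 1 0) (pm 1 1).

Lemma sp_act_mu_split (T : 'M[int]_(2 + 2)) (g1 g2 : 'M[int]_2) (x y : R[i]) :
  map_mx (fun z : int => z%:~R : R[i]) T = mu_split g1 g2 ->
  \det g1 != 0 -> \det g2 != 0 -> upper_half x -> upper_half y ->
  sp_act T (per_mx x y) = per_mx (mobius g1 x) (mobius g2 y).
Proof.
move=> split_T det_g1 det_g2 Im_x Im_y.
rewrite /sp_act /= split_T /mu_split block_mxKul block_mxKur block_mxKdl block_mxKdr.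
by rewrite !per_mx_mul !per_mx_add invmx_per_mx ?mobius_den_neq0 // per_mx_mul.
Qed.

End Mobius.

Lemma map_circ_blocks (R : realType) (a b c d e f g h : int) :
  map_mx (fun z : int => z%:~R : R[i])
    (block_mx (circ a b) (circ c d) (circ e f) (circ g h)) =
  mu_split R (mx2 (a + b) (c + d) (e + f) (g + h)) (mx2 (a - b) (c - d) (e - f) (g - h)).
Proof. by rewrite map_block_mx !map_circ !circ_per_mx /mu_split !mxE /= !intrD !intrN. Qed.

Theorem lemma1 (R : realType) (T : 'M[int]_(2 + 2)) :
  symplectic T ->
  mu_cyc (new_cycle T 2) = new_cycle T 3 ->
  mu_cyc (new_cycle T 0) = new_cycle T 1 ->
  exists g1 g2 : 'M[int]_2,
    [/\ SL2Z g1, SL2Z g2, Gamma2 (g1 *m invmx g2),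
        (forall x y : R[i], upper_half x -> upper_half y ->
           sp_act T (per_mx x y) = per_mx (mobius g1 x) (mobius g2 y)) &
        (let k1 := g1 0 0 in let l1 := g1 0 1 in
         let m1 := g1 1 0 in let n1 := g1 1 1 in
         let k2 := g2 0 0 in let l2 := g2 0 1 in
         let m2 := g2 1 0 in let n2 := g2 1 1 in
         [/\ [/\ 2 * ent T 0 0 = k1 + k2, 2 * ent T 0 1 = k1 - k2,
                 2 * ent T 0 2 = l1 + l2 & 2 * ent T 0 3 = l1 - l2],
             [/\ 2 * ent T 1 0 = k1 - k2, 2 * ent T 1 1 = k1 + k2,
                 2 * ent T 1 2 = l1 - l2 & 2 * ent T 1 3 = l1 + l2],
             [/\ 2 * ent T 2 0 = m1 + m2, 2 * ent T 2 1 = m1 - m2,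
                 2 * ent T 2 2 = n1 + n2 & 2 * ent T 2 3 = n1 - n2] &
             [/\ 2 * ent T 3 0 = m1 - m2, 2 * ent T 3 1 = m1 + m2,
                 2 * ent T 3 2 = n1 - n2 & 2 * ent T 3 3 = n1 + n2]])].
Proof.
move=> sympT mu2 mu0.
have [r10 r11 r12 r13] := mu_cyc_new_cycle mu0 isT.
have [r30 r31 r32 r33] := mu_cyc_new_cycle mu2 isT.
have blocks := mu_invariant_blocks mu0 mu2.
have sympl_blocks := symplectic_ur sympT.
rewrite blocks block_mxKul block_mxKur block_mxKdl block_mxKdr !tr_circ in sympl_blocks.
move: blocks sympl_blocks r10 r11 r12 r13 r30 r31 r32 r33.
set a := ent T 0 0; set b := ent T 0 1; set c := ent T 0 2; set d := ent T 0 3.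
set e := ent T 2 0; set f := ent T 2 1; set g := ent T 2 2; set h := ent T 2 3.
move=> blocks /circ_symplectic_det[det_g1 det_g2] -> -> -> -> -> -> -> ->.
exists (mx2 (a + b) (c + d) (e + f) (g + h)), (mx2 (a - b) (c - d) (e - f) (g - h)).
have sl_g1 : SL2Z (mx2 (a + b) (c + d) (e + f) (g + h)) by rewrite /SL2Z det_mx2 det_g1.
have sl_g2 : SL2Z (mx2 (a - b) (c - d) (e - f) (g - h)) by rewrite /SL2Z det_mx2 det_g2.
split=> //.
- apply: Gamma2_mul_invmx => // i j; rewrite !mxE.
  have even_diff (p q : int) : (2 %| (p + q) - (p - q))%Z.
    by rewrite (_ : _ - _ = 2 * q) ?dvdz_mulr //; ring.
  by case: (i == 0); case: (j == 0); apply: even_diff.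
- move=> x y Im_x Im_y; apply: sp_act_mu_split => //.
  + by rewrite blocks map_circ_blocks.
  + by rewrite sl_g1 oner_neq0.
  + by rewrite sl_g2 oner_neq0.
- by rewrite /= !mxE /=; split; split; ring.
Qed.
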